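(* Let $\varepsilon>0$ be small, $x$ large, $0\le\theta\le\frac1{30}$, $\rho=\frac12(1-4\theta)-\varepsilon$, and $z_1\le x^{1/2}$. Let $$\mathcal{D}^{+,\mathrm{LIN}}=\{p_1\cdots p_r\le x^{\rho}:\ z_1\ge p_1>\dots>p_r,\ p_1\cdots p_{2k-2}p_{2k-1}^3\le x^{\rho}\text{ for all }k\ge1\}$$ ($p_i$ primes). Then for any $D\in[x^{1/5},x^{\rho}]$, every $d\in\mathcal{D}^{+,\mathrm{LIN}}$ can be written as $d=d_1d_2$ with positive integers $d_1,d_2$ satisfying $d_1\le D$ and $d_1d_2^2\le x^{1-4\theta-2\varepsilon^2}/D$; moreover one can take either $d_1\ge x^{0.1}$ or $d_2=1$.
   Context: Conditions in the definition of $\mathcal{D}^{+,\mathrm{LIN}}$ involving indices larger than $r$ are vacuous. *)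

From HB Require Import structures.
From mathcomp Require Import all_boot all_order all_algebra.
From mathcomp Require Import all_classical all_reals all_analysis.
Set Implicit Arguments. Unset Strict Implicit. Unset Printing Implicit Defensive.
Import Order.TTheory GRing.Theory Num.Theory.
Local Open Scope ring_scope.

(* The list s = [p_1; ...; p_r]
   is 0-indexed, so p_{2k-1} = nth 0 s (2k-2); we write it with j = k-1. *)
Definition DLIN (R : realType) (x rho z1 : R) (d : nat) : Prop :=
  exists s : seq nat,
    all prime s /\
    sorted (fun m n : nat => (n < m)%N) s /\
    d = (\prod_(p <- s) p)%N /\
    (d%:R <= x `^ rho) /\
    (forall p, p \in s -> p%:R <= z1) /\
    (forall j : nat, (2 * j < size s)%N ->
       (((\prod_(p <- take (2 * j) s) p) * (nth 0%N s (2 * j)) ^ 3)%N)%:R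
         <= x `^ rho).

(* Write d = p_1 ... p_r with p_1 > ... > p_r and P = x^rho.  The cube
   conditions p_1 ... p_(2k-2) p_(2k-1)^3 <= P say that d is well factorable:
   for any R1, R2 >= 1 with R1 R2 = P, the primes can be dealt out in
   consecutive pairs to two factors bounded by R1 and R2.  If p_(2k-1) goes to
   the first factor, p_(2k) joins it when it fits, and otherwise fits into the
   second one because p_(2k-1) p_(2k)^2 <= p_(2k-1)^3; dividing R1 R2 by
   p_(2k-1) p_(2k) then preserves the cube condition for the remaining primes.
   With R1 = D and R2 = P / D, and p_1 <= P^(1/3) <= D placed in the first
   factor, this gives d = d1 d2 with d1 <= D and d1 d2^2 <= D (P / D)^2.  If
   d1 < x^(1/10), all primes of d2 are below x^(1/10) and moving them to d1 one
   at a time brings d1 into [x^(1/10), x^(1/5)]; when d <= D one simply takes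
   d2 = 1. *)

From HB Require Import structures.
From mathcomp Require Import all_boot all_order all_algebra.
From mathcomp Require Import all_classical all_reals all_analysis.
From mathcomp Require Import ring lra.

Set Implicit Arguments.
Unset Strict Implicit.
Unset Printing Implicit Defensive.
Import Order.TTheory GRing.Theory Num.Theory.
Local Open Scope ring_scope.

Section WellFactorable.
Variable R : realFieldType.
Implicit Types (l : seq nat) (P Q D T : R).

Definition cube_bounded Q l : Prop :=
  forall j : nat, (2 * j < size l)%N ->
    (((\prod_(p <- take (2 * j) l) p) * (nth 0%N l (2 * j)) ^ 3)%N)%:R <= Q.

Definition splits (R1 R2 : R) l : Prop :=
  exists lA lB : seq nat, [/\ perm_eq (lA ++ lB) l,
    (\prod_(p <- lA) p)%N%:R <= R1 & (\prod_(p <- lB) p)%N%:R <= R2].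

Lemma prod_seq_gt0 l : all (fun p => 0 < p)%N l -> (0 < \prod_(p <- l) p)%N.
Proof. by move=> /allP l_gt0; rewrite big_seq prodn_cond_gt0. Qed.

Lemma cube_bounded_head Q a l : cube_bounded Q (a :: l) -> a%:R ^+ 3 <= Q.
Proof. by move=> /(_ 0%N isT); rewrite take0 big_nil mul1n natrX. Qed.

Lemma cube_bounded_behead2 Q a b l : (0 < a)%N -> (0 < b)%N ->
  cube_bounded Q [:: a, b & l] -> cube_bounded (Q / (a * b)%N%:R) l.
Proof.
move=> a_gt0 b_gt0 hQ j hj.
rewrite ler_pdivlMr ?ltr0n ?muln_gt0 ?a_gt0 //.
have := hQ j.+1; rewrite mulnS /= add0n => /(_ hj) hQj.
rewrite (le_trans _ hQj) // -natrM ler_nat !big_cons eq_leq //; ring.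
Qed.

Lemma le_max_of_cube_le (a R1 R2 : R) : a ^+ 3 <= R1 * R2 ->
  1 <= a -> 0 <= R1 -> 0 <= R2 -> a <= R1 \/ a <= R2.
Proof.
move=> a3 a_ge1 R1_ge0 R2_ge0; case: (lerP a R1) => [|aR1]; [by left|right].
by rewrite leNgt; apply/negP => aR2; nra.
Qed.

Lemma le_of_cube_le_pair (a b R1 R2 : R) : a ^+ 3 <= R1 * R2 ->
  0 < b -> b <= a -> 0 <= R1 -> R1 < a * b -> b <= R2.
Proof.
move=> a3 b_gt0 ba R1_ge0 R1ab; rewrite leNgt; apply/negP => R2b.
have : a * b * b <= a ^+ 3 by rewrite !exprS expr0 mulr1; nra.
have : R1 * R2 <= R1 * b by rewrite ler_wpM2l // ltW.
have : R1 * b < a * b * b by rewrite ltr_pM2r.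
lra.
Qed.

Lemma splits_nil (R1 R2 : R) : 1 <= R1 -> 1 <= R2 -> splits R1 R2 [::].
Proof. by exists [::], [::]; rewrite !big_nil. Qed.

Lemma splits_sym (R1 R2 : R) l : splits R1 R2 l -> splits R2 R1 l.
Proof. by case=> lA [lB [perm_l hA hB]]; exists lB, lA; rewrite perm_catC. Qed.

Lemma splits_cons (R1 R2 : R) a l : (0 < a)%N ->
  splits (R1 / a%:R) R2 l -> splits R1 R2 (a :: l).
Proof.
move=> a_gt0 [lA [lB [perm_l hA hB]]]; exists (a :: lA), lB; split => //.
  by rewrite /= perm_cons.
by rewrite big_cons natrM mulrC -ler_pdivlMr ?ltr0n.
Qed.

Lemma splits_with_head (R1 R2 : R) a l :
  (forall R1' R2' : R, 1 <= R1' -> 1 <= R2' ->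
     all (fun p => 0 < p)%N (behead l) -> sorted geq (behead l) ->
     cube_bounded (R1' * R2') (behead l) -> splits R1' R2' (behead l)) ->
  (0 < a)%N -> all (fun p => 0 < p)%N l -> sorted geq (a :: l) ->
  a%:R <= R1 -> 1 <= R2 -> cube_bounded (R1 * R2) (a :: l) ->
  splits (R1 / a%:R) R2 l.
Proof.
move=> split_tail a_gt0 + + aR1 R2_ge1 hQ.
have a_pos : 0 < a%:R :> R by rewrite ltr0n.
have R1a_ge1 : 1 <= R1 / a%:R by rewrite ler_pdivlMr ?mul1r.
case: l split_tail hQ => [|b l] /= split_tail hQ; first by move=> *; exact: splits_nil.
case/andP=> b_gt0 l_gt0 /andP[ba /path_sorted sorted_l].
have b_pos : 0 < b%:R :> R by rewrite ltr0n.
have tail_bound R1' R2' : R1' * R2' = R1 * R2 / (a * b)%N%:R -> 1 <= R1' -> 1 <= R2' ->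
    splits R1' R2' l.
  move=> R12 R1'_ge1 R2'_ge1; apply: split_tail => //.
  by rewrite R12; exact: cube_bounded_behead2.
have [abR1 | R1ab] := lerP (a%:R * b%:R) R1.
  apply: splits_cons => //; apply: tail_bound => //.
    by rewrite natrM invfM; ring.
  by rewrite !ler_pdivlMr ?mul1r 1?mulrC.
have bR2 : b%:R <= R2.
  by apply: (le_of_cube_le_pair (cube_bounded_head hQ)); rewrite ?ler_nat //; lra.
apply/splits_sym/splits_cons => //; apply/splits_sym/tail_bound => //.
  by rewrite natrM invfM; ring.
by rewrite ler_pdivlMr ?mul1r.
Qed.

Lemma cube_bounded_splits (R1 R2 : R) l : 1 <= R1 -> 1 <= R2 ->
  all (fun p => 0 < p)%N l -> sorted geq l -> cube_bounded (R1 * R2) l ->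
  splits R1 R2 l.
Proof.
have [n] := ubnP (size l); elim: n => // n IH in l R1 R2 *.
case: l => [|a l] /= size_l R1_ge1 R2_ge1; first by move=> *; exact: splits_nil.
case/andP=> a_gt0 l_gt0 sorted_al hQ.
have split_tail R1' R2' : 1 <= R1' -> 1 <= R2' ->
    all (fun p => 0 < p)%N (behead l) -> sorted geq (behead l) ->
    cube_bounded (R1' * R2') (behead l) -> splits R1' R2' (behead l).
  by apply: IH; rewrite size_behead (leq_ltn_trans (leq_pred _)).
have a_ge1 : 1 <= a%:R :> R by rewrite ler1n.
have [aR1 | aR2] := le_max_of_cube_le (cube_bounded_head hQ) a_ge1
  (le_trans ler01 R1_ge1) (le_trans ler01 R2_ge1).
  by apply: splits_cons => //; exact: splits_with_head.
apply/splits_sym/splits_cons => //; apply: splits_with_head => //.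
by rewrite mulrC.
Qed.

Lemma prefix_crossing T (c : nat) L : c%:R < T -> (forall q, q \in L -> q%:R < T) ->
  T <= ((c * \prod_(p <- L) p)%N)%:R ->
  exists L1 L2, [/\ L = L1 ++ L2, T <= ((c * \prod_(p <- L1) p)%N)%:R
                   & ((c * \prod_(p <- L1) p)%N)%:R < T ^+ 2].
Proof.
elim: L c => [|q L IH] c cT L_lt; first by rewrite big_nil muln1 leNgt cT.
have qT : q%:R < T by rewrite L_lt ?mem_head.
rewrite big_cons mulnA => T_le.
have [Tcq | cqT] := lerP T ((c * q)%N)%:R.
  exists [:: q], L; split => //; rewrite big_seq1 // natrM.
  by have := ler0n R c; have := ler0n R q; nra.
have L_lt' r : r \in L -> r%:R < T by move=> rL; rewrite L_lt // inE rL orbT.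
have [L1 [L2 [-> TcL1 cL1T]]] := IH _ cqT L_lt' T_le.
by exists (q :: L1), L2; rewrite big_cons mulnA.
Qed.

Definition balanced_factorization P D T (d : nat) : Prop :=
  exists d1 d2 : nat, [/\ d = (d1 * d2)%N, d1%:R <= D,
    ((d1 * d2 ^ 2)%N)%:R <= P ^+ 2 / D & T <= d1%:R \/ d2 = 1%N].

Lemma balanced_factorization_mul P D T (d1 d2 : nat) : 0 < D ->
  d1%:R <= D -> d2%:R <= P / D -> ((d1 * d2)%N)%:R <= P ->
  T <= d1%:R \/ d2 = 1%N -> balanced_factorization P D T (d1 * d2)%N.
Proof.
move=> D_gt0 d1D d2PD d12P hT; exists d1, d2; split => //.
have d2D : d2%:R * D <= P by rewrite -ler_pdivlMr.
rewrite ler_pdivlMr // expnS expn1 mulnA natrM -mulrA expr2.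
by apply: ler_pM => //; rewrite mulr_ge0 // ltW.
Qed.

Lemma balanced_factorization_lift P D T (c : nat) L :
  all (fun p => 0 < p)%N L -> (forall q, q \in L -> q <= c)%N -> c%:R < T ->
  1 <= T -> T ^+ 2 <= D -> D < ((c * \prod_(p <- L) p)%N)%:R ->
  (\prod_(p <- L) p)%N%:R <= P / D -> ((c * \prod_(p <- L) p)%N)%:R <= P ->
  balanced_factorization P D T (c * \prod_(p <- L) p)%N.
Proof.
move=> L_gt0 L_le cT T_ge1 TD Dd LPD dP.
have L_lt q : q \in L -> q%:R < T by move=> /L_le qc; apply: le_lt_trans cT; rewrite ler_nat.
have TT : T <= T ^+ 2 by rewrite expr2; nra.
have [L1 [L2 [L_eq TcL1 cL1T]]] := prefix_crossing cT L_lt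
  (le_trans TT (le_trans TD (ltW Dd))).
move: L_gt0 LPD dP; rewrite L_eq big_cat mulnA all_cat => /andP[L1_gt0 _] LPD dP.
have D_gt0 : 0 < D by apply: lt_le_trans TD; rewrite expr2; nra.
apply: balanced_factorization_mul => //; last by left.
  exact: le_trans (ltW cL1T) TD.
by apply: le_trans LPD; rewrite ler_nat leq_pmull ?prod_seq_gt0.
Qed.

Lemma cube_bounded_balanced P D T l :
  all (fun p => 0 < p)%N l -> sorted geq l -> 1 <= T -> T ^+ 2 <= D -> D <= P ->
  P <= D ^+ 3 -> (\prod_(p <- l) p)%N%:R <= P -> cube_bounded P l ->
  balanced_factorization P D T (\prod_(p <- l) p)%N.
Proof.
move=> l_gt0 sorted_l T_ge1 TD DP PD dP hQ.
have D_ge1 : 1 <= D := le_trans (exprn_ege1 2 T_ge1) TD.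
have D_gt0 : 0 < D := lt_le_trans ltr01 D_ge1.
have PD_ge1 : 1 <= P / D by rewrite ler_pdivlMr ?mul1r.
have [dD | Dd] := lerP (\prod_(p <- l) p)%N%:R D.
  rewrite -[X in balanced_factorization _ _ _ X]muln1.
  by apply: balanced_factorization_mul; rewrite ?muln1 //; right.
case: l l_gt0 sorted_l dP hQ Dd => [|p l]; first by rewrite big_nil => *; lra.
move=> /= /andP[p_gt0 l_gt0] sorted_pl dP hQ Dd.
have pD : p%:R <= D.
  rewrite -(ler_pXn2r (_ : 0 < 3)%N) ?nnegrE ?(ltW D_gt0) //.
  exact: le_trans (cube_bounded_head hQ) PD.
have [lA [lB [perm_l lA_le lB_le]]] : splits (D / p%:R) (P / D) l.
  apply: splits_with_head => //; last by rewrite mulrC divfK ?gt_eqF.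
  by move=> *; exact: cube_bounded_splits.
have lB_le_p q : q \in lB -> (q <= p)%N.
  move=> q_lB; apply: (allP (order_path_min (rev_trans leq_trans) sorted_pl)).
  by rewrite -(perm_mem perm_l) mem_cat q_lB orbT.
have /andP[lA_gt0 lB_gt0] : all (fun p => 0 < p)%N lA && all (fun p => 0 < p)%N lB.
  by rewrite -all_cat (perm_all _ perm_l).
set c := (p * \prod_(q <- lA) q)%N.
have d_eq : (\prod_(q <- p :: l) q = c * \prod_(q <- lB) q)%N.
  by rewrite big_cons -(perm_big _ perm_l) big_cat mulnA.
have cD : c%:R <= D by rewrite natrM mulrC -ler_pdivlMr ?ltr0n.
rewrite d_eq in dP Dd *.
have [Tc | cT] := lerP T c%:R; first by apply: balanced_factorization_mul => //; left.
apply: balanced_factorization_lift => // q /lB_le_p /leq_trans; apply.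
by rewrite leq_pmulr // prod_seq_gt0.
Qed.

End WellFactorable.

Theorem lemma9 (R : realType) :
  exists eps0 : R, 0 < eps0 /\
  forall eps : R, 0 < eps -> eps < eps0 ->
  exists x0 : R, forall (x theta z1 D : R) (d : nat),
    x0 <= x ->
    0 <= theta -> theta <= 1 / 30 ->
    z1 <= x `^ (1 / 2) ->
    let rho := (1 - 4 * theta) / 2 - eps in
    x `^ (1 / 5) <= D -> D <= x `^ rho ->
    DLIN x rho z1 d ->
    exists d1 d2 : nat,
      (0 < d1)%N /\ (0 < d2)%N /\ d = (d1 * d2)%N /\
      d1%:R <= D /\
      ((d1 * d2 ^ 2)%N)%:R <= x `^ (1 - 4 * theta - 2 * eps ^+ 2) / D /\
      (x `^ (1 / 10) <= d1%:R \/ d2 = 1%N).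
Proof.
exists 1; split => // eps eps_gt0 eps_lt1; exists 1.
move=> x theta z1 D d x_ge1 theta_ge0 theta_le _ rho xD Dx.
case=> s [s_prime [s_sorted [-> [dP [_ hQ]]]]].
have powR_nat (a : R) (n : nat) : x `^ (a * n%:R) = x `^ a ^+ n.
  by rewrite powRrM powR_mulrn ?powR_ge0.
have T_ge1 : 1 <= x `^ (1 / 10) by rewrite -[leLHS](powRr0 x) ler_powR.
have TD : x `^ (1 / 10) ^+ 2 <= D.
  by rewrite -powR_nat (_ : 1 / 10 * 2%:R = 1 / 5) //; field.
have D_ge0 : 0 <= D := le_trans (powR_ge0 _ _) xD.
have PD : x `^ rho <= D ^+ 3.
  apply: le_trans (_ : x `^ (1 / 5 * 3%:R) <= _).
    by rewrite ler_powR // /rho; lra.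
  by rewrite powR_nat lerXn2r ?nnegrE ?powR_ge0.
have P2 : x `^ rho ^+ 2 <= x `^ (1 - 4 * theta - 2 * eps ^+ 2).
  by rewrite -powR_nat ler_powR // /rho; nra.
have s_gt0 : all (fun p => 0 < p)%N s.
  by apply: sub_all s_prime => p /prime_gt0.
have [d1 [d2 [d_eq d1D d12 d1T]]] := cube_bounded_balanced s_gt0
  (sub_sorted (fun m n => @ltnW n m) s_sorted) T_ge1 TD Dx PD dP hQ.
have := prod_seq_gt0 s_gt0; rewrite d_eq muln_gt0 => /andP[d1_gt0 d2_gt0].
exists d1, d2; do 5 split => //.
by apply: le_trans d12 _; rewrite ler_wpM2r // invr_ge0.
Qed.
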